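(* Let $E$ be a finite set and let $f:\mathbb{Z}_+^E\to\mathbb{R}_{\ge 0}$ be a non-negative lattice submodular function. Then for every $\mathbf{s}\in\mathbb{Z}_+^E$ and every $\mathbf{x},\mathbf{y}\in\mathbb{Z}_+^E$ with $\mathbf{x}\wedge\mathbf{y}=\mathbf{0}$, $$f(\mathbf{s})\le f(\mathbf{s}\vee\mathbf{x})+f(\mathbf{s}\vee\mathbf{y}).$$
   Context: For $\mathbf{x},\mathbf{y}\in\mathbb{Z}_+^E$, $\mathbf{x}\wedge\mathbf{y}$ and $\mathbf{x}\vee\mathbf{y}$ denote the coordinatewise minimum and maximum, respectively. A function $f:\mathbb{Z}_+^E\to\mathbb{R}$ is lattice submodular if $f(\mathbf{x})+f(\mathbf{y})\ge f(\mathbf{x}\vee\mathbf{y})+f(\mathbf{x}\wedge\mathbf{y})$ for all $\mathbf{x},\mathbf{y}\in\mathbb{Z}_+^E$. *)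

From mathcomp Require Import all_boot all_order all_algebra.
Set Implicit Arguments. Unset Strict Implicit. Unset Printing Implicit Defensive.
Import Order.TTheory GRing.Theory Num.Theory.

Definition vmeet (E : finType) (x y : E -> nat) : E -> nat := fun e => minn (x e) (y e).
Definition vjoin (E : finType) (x y : E -> nat) : E -> nat := fun e => maxn (x e) (y e).
Definition vzero (E : finType) : E -> nat := fun _ => 0%N.

Local Open Scope ring_scope.
Definition lattice_submodular (R : realFieldType) (E : finType) (f : (E -> nat) -> R) :=
  forall x y : E -> nat, f (vjoin x y) + f (vmeet x y) <= f x + f y.

From mathcomp Require Import all_boot all_order all_algebra.
From Stdlib Require Import FunctionalExtensionality.
From mathcomp Require Import zify.
Import Order.TTheory GRing.Theory Num.Theory.
Local Open Scope ring_scope.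

(* Submodularity applied to s \/ x and s \/ y, whose meet is s because x and y
   have disjoint supports; the leftover term f (s \/ x \/ y) is dropped by
   non-negativity. *)

Lemma vmeet_vjoinl_disjoint (E : finType) (s x y : E -> nat) :
  (forall e, vmeet x y e = 0%N) -> vmeet (vjoin s x) (vjoin s y) = s.
Proof.
move=> hxy; apply: functional_extensionality => e.
by have := hxy e; rewrite /vmeet /vjoin; lia.
Qed.

Theorem lemma1 (R : realFieldType) (E : finType) (f : (E -> nat) -> R)
  (f_ge0 : forall x, 0 <= f x) (f_sub : lattice_submodular f)
  (s x y : E -> nat) (hxy : forall e, vmeet x y e = 0%N) :
  f s <= f (vjoin s x) + f (vjoin s y).
Proof.
have := f_sub (vjoin s x) (vjoin s y).
rewrite vmeet_vjoinl_disjoint //; apply: le_trans.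
by rewrite lerDr f_ge0.
Qed.
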